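(* Let $2\le n\le6$ and $0<\lambda<1$. For $f:[0,\pi/2]\to(0,\infty)$ set $$S_{n,\lambda}(f)=\int_0^{\pi/2}\sqrt{(f')^2+\lambda^2f^2}\,f^{n-1}\cos^{n-1}\theta\,d\theta .$$ Consider the ODE $$\left(\frac{f'\cos^{n-1}\theta}{\sqrt{(f')^2+\lambda^2f^2}}\right)'-\frac{n\lambda^2f\cos^{n-1}\theta}{\sqrt{(f')^2+\lambda^2f^2}}=0,\qquad f(0)=1,\ f'(0)=A.$$ If for some $A$ the solution $f$ can be extended to $[0,\pi/2]$ and is a minimizer of $S_{n,\lambda}$ (among functions $g$ with $g(0)=1$), then $S_{n,\lambda}(f)<\frac1n$; consequently the totally geodesic hypercone $C(S^{n-1}(\lambda))$ is not area-minimizing in $C(S^n(\lambda))$.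
   Context: $C(S^n(\lambda))$ is the cone over the round $n$-sphere of radius $\lambda$, modelled as $\mathbb{R}^{n+1}$ with metric $dr^2+\lambda^2r^2g_{S^n}$; $C(S^{n-1}(\lambda))$ is the cone over the equator. For a rotationally symmetric hypersurface given in polar coordinates by $r=f(\theta)$, $\theta\in[0,\pi/2]$ the polar angle from the equatorial hyperplane, its area is $n\omega_n\lambda^{n-1}S_{n,\lambda}(f)$, while the truncated cone $C(S^{n-1}(\lambda))\cap\{r\le1\}$ has area $\omega_n\lambda^{n-1}$; the ODE is the Euler–Lagrange equation of $S_{n,\lambda}$. *)

From Stdlib Require Import Reals.
From Coquelicot Require Import Coquelicot.
Open Scope R_scope.

Definition S_integrand (n : nat) (lam : R) (f : R -> R) (t : R) : R :=
  sqrt ((Derive f t) ^ 2 + lam ^ 2 * (f t) ^ 2) * (f t) ^ (n - 1) * (cos t) ^ (n - 1).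

Definition S_nl (n : nat) (lam : R) (f : R -> R) : R :=
  RInt (S_integrand n lam f) 0 (PI / 2).

Definition admissible (g : R -> R) : Prop :=
  forall t, 0 <= t <= PI / 2 ->
    0 < g t /\ ex_derive g t /\ continuous (Derive g) t.

Definition flux (n : nat) (lam : R) (f : R -> R) (t : R) : R :=
  Derive f t * (cos t) ^ (n - 1) / sqrt ((Derive f t) ^ 2 + lam ^ 2 * (f t) ^ 2).

Definition solves_EL (n : nat) (lam A : R) (f : R -> R) : Prop :=
  f 0 = 1 /\ Derive f 0 = A /\
  forall t, 0 <= t < PI / 2 ->
    is_derive (flux n lam f) t
      (INR n * lam ^ 2 * f t * (cos t) ^ (n - 1)
         / sqrt ((Derive f t) ^ 2 + lam ^ 2 * (f t) ^ 2)).

From Stdlib Require Import Reals Lra Lia.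
From Coquelicot Require Import Coquelicot.
Open Scope R_scope.

(* Integrating the Euler-Lagrange equation gives the value of S_{n,lambda} at a
   solution: with W = sqrt((f')^2 + lambda^2 f^2) and flux = f' cos^(n-1) / W,
   the equation says exactly that (f^n flux / n)' is the integrand of S_{n,lambda}.
   Since flux vanishes at pi/2 (cos = 0 there, n >= 2) and f(0) = 1, f'(0) = A,
   S_{n,lambda}(f) = -A / (n sqrt(A^2 + lambda^2)), which is < 1/n because
   |A| < sqrt(A^2 + lambda^2). *)

Lemma continuous_pow_comp (g : R -> R) (k : nat) (x : R) :
  continuous g x -> continuous (fun t => g t ^ k) x.
Proof.
  intros Hg; induction k as [|k IH]; simpl.
  - apply continuous_const.
  - apply (continuous_mult g (fun t => g t ^ k)); auto.
Qed.

Lemma RInt_lim_left (h : R -> R) (a b : R) :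
  a < b -> (forall x, a <= x <= b -> continuous h x) ->
  filterlim (fun x => RInt h a x) (at_left b) (locally (RInt h a b)).
Proof.
  intros Hab Hh.
  assert (Hex : forall x y, a <= x <= y -> y <= b -> ex_RInt h x y).
  { intros x y Hxy Hyb; apply (@ex_RInt_continuous R_CompleteNormedModule).
    intros z Hz; rewrite Rmin_left, Rmax_right in Hz by lra; apply Hh; lra. }
  destruct (continuity_ab_maj (fun t => Rabs (h t)) a b) as [c [Hc _]]; [lra| |].
  { intros z Hz; apply continuity_pt_filterlim,
      (continuous_comp h Rabs), continuity_pt_filterlim, Rcontinuity_abs.
    now apply Hh. }
  set (M := Rabs (h c)); assert (HM : 0 <= M) by apply Rabs_pos.
  apply filterlim_locally; intros eps.
  assert (Hd : 0 < Rmin (b - a) (eps / (M + 1))).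
  { apply Rmin_pos; [lra | apply Rdiv_lt_0_compat; [apply cond_pos | lra]]. }
  exists (mkposreal _ Hd); intros x Hx Hxb.
  change (Rabs (x - b) < Rmin (b - a) (eps / (M + 1))) in Hx.
  rewrite Rabs_left in Hx by lra.
  pose proof (Rmin_l (b - a) (eps / (M + 1))) as Hd1.
  pose proof (Rmin_r (b - a) (eps / (M + 1))) as Hd2.
  change (Rabs (RInt h a x - RInt h a b) < eps).
  assert (Hsplit : RInt h a x + RInt h x b = RInt h a b)
    by (apply (RInt_Chasles h a x b); apply Hex; lra).
  rewrite <- Hsplit.
  replace (RInt h a x - (RInt h a x + RInt h x b)) with (- RInt h x b) by ring.
  rewrite Rabs_Ropp.
  assert (Hbound : Rabs (RInt h x b) <= (b - x) * M).
  { apply abs_RInt_le_const; [lra | apply Hex; lra |].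
    intros t Ht; apply Hc; lra. }
  assert (Hsmall : (b - x) * (M + 1) < eps).
  { apply Rlt_le_trans with (eps / (M + 1) * (M + 1)).
    - apply Rmult_lt_compat_r; lra.
    - right; field; lra. }
  nra.
Qed.

Lemma RInt_derive_left_open (F h : R -> R) (a b : R) :
  a < b ->
  (forall x, a <= x < b -> is_derive F x (h x)) ->
  (forall x, a <= x <= b -> continuous h x) ->
  continuous F b ->
  RInt h a b = F b - F a.
Proof.
  intros Hab HF Hh HFb.
  apply (filterlim_locally_unique (F := at_left b) (fun x => RInt h a x)).
  - now apply RInt_lim_left.
  - apply (filterlim_ext_loc (fun x => F x - F a)).
    + exists (mkposreal _ (proj2 (Rlt_0_minus _ _) Hab)); intros x Hx Hxb.
      change (Rabs (x - b) < b - a) in Hx; rewrite Rabs_left in Hx by lra.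
      symmetry; apply (@is_RInt_unique R_CompleteNormedModule).
      apply (@is_RInt_derive R_CompleteNormedModule);
        intros y Hy; rewrite Rmin_left, Rmax_right in Hy by lra.
      * apply HF; lra.
      * apply Hh; lra.
    + apply (filterlim_filter_le_1 _ (filter_le_within _)).
      apply (continuous_minus F (fun _ => F a)); [exact HFb | apply continuous_const].
Qed.

Lemma Rdiv_sqrt_sqr_plus_gt_m1 (A lam : R) : lam <> 0 -> -1 < A / sqrt (A ^ 2 + lam ^ 2).
Proof.
  intros Hlam.
  assert (Hlam2 : 0 < lam ^ 2) by (apply pow2_gt_0; exact Hlam).
  assert (Habs : Rabs A < sqrt (A ^ 2 + lam ^ 2)).
  { rewrite <- sqrt_Rsqr_abs; apply sqrt_lt_1_alt; split;
      [apply Rle_0_sqr | unfold Rsqr; simpl in *; lra]. }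
  assert (Hpos : 0 < sqrt (A ^ 2 + lam ^ 2)) by (pose proof (Rabs_pos A); lra).
  apply Rmult_lt_reg_r with (sqrt (A ^ 2 + lam ^ 2)); [exact Hpos|].
  unfold Rdiv; rewrite Rmult_assoc, Rinv_l, Rmult_1_r by lra.
  pose proof (Rle_abs (- A)); rewrite Rabs_Ropp in *; lra.
Qed.

Section Profile.

Variables (n : nat) (lam : R) (f : R -> R).
Hypotheses (lam_pos : 0 < lam) (f_adm : admissible f).

Definition speed (t : R) : R := sqrt (Derive f t ^ 2 + lam ^ 2 * f t ^ 2).

Definition flux_potential (t : R) : R := f t ^ n * flux n lam f t / INR n.

Lemma speed_sqr (t : R) :
  0 <= t <= PI / 2 -> speed t ^ 2 = Derive f t ^ 2 + lam ^ 2 * f t ^ 2.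
Proof.
  intros Ht; apply pow2_sqrt.
  destruct (f_adm t Ht) as [Hf _].
  pose proof (pow2_ge_0 (Derive f t)); pose proof (pow2_gt_0 lam).
  pose proof (pow2_gt_0 (f t)); nra.
Qed.

Lemma speed_pos (t : R) : 0 <= t <= PI / 2 -> 0 < speed t.
Proof.
  intros Ht; apply sqrt_lt_R0.
  destruct (f_adm t Ht) as [Hf _].
  pose proof (pow2_ge_0 (Derive f t)).
  assert (0 < lam ^ 2 * f t ^ 2) by (apply Rmult_lt_0_compat; apply pow2_gt_0; lra).
  lra.
Qed.

Lemma continuous_profile (t : R) : 0 <= t <= PI / 2 -> continuous f t.
Proof.
  intros Ht; apply (@ex_derive_continuous R_AbsRing R_NormedModule), (f_adm t Ht).
Qed.

Lemma continuous_speed (t : R) : 0 <= t <= PI / 2 -> continuous speed t.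
Proof.
  intros Ht; apply continuous_sqrt_comp.
  apply (continuous_plus (fun t => Derive f t ^ 2) (fun t => lam ^ 2 * f t ^ 2)).
  - apply continuous_pow_comp, (f_adm t Ht).
  - apply (continuous_mult (fun _ => lam ^ 2)); [apply continuous_const|].
    apply continuous_pow_comp, continuous_profile, Ht.
Qed.

Lemma continuous_S_integrand (t : R) :
  0 <= t <= PI / 2 -> continuous (S_integrand n lam f) t.
Proof.
  intros Ht.
  apply (continuous_mult (fun t => speed t * f t ^ (n - 1))).
  - apply (continuous_mult speed); [now apply continuous_speed|].
    apply continuous_pow_comp, continuous_profile, Ht.
  - apply continuous_pow_comp, continuous_cos.
Qed.

Lemma continuous_flux_potential (t : R) :
  0 <= t <= PI / 2 -> continuous flux_potential t.
Proof.
  intros Ht.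
  apply (continuous_mult (fun t => f t ^ n * flux n lam f t)); [|apply continuous_const].
  apply (continuous_mult (fun t => f t ^ n)).
  - apply continuous_pow_comp, continuous_profile, Ht.
  - apply (continuous_mult (fun t => Derive f t * cos t ^ (n - 1))).
    + apply (continuous_mult (Derive f)); [apply (f_adm t Ht)|].
      apply continuous_pow_comp, continuous_cos.
    + apply (continuous_Rinv_comp speed); [now apply continuous_speed|].
      apply Rgt_not_eq, speed_pos, Ht.
Qed.

Lemma is_derive_flux_potential (A t : R) :
  (n <> 0)%nat -> solves_EL n lam A f -> 0 <= t < PI / 2 ->
  is_derive flux_potential t (S_integrand n lam f t).
Proof.
  intros Hn [_ [_ EL]] Ht.
  assert (Ht' : 0 <= t <= PI / 2) by lra.
  assert (Hf : is_derive f t (Derive f t)) by apply Derive_correct, (f_adm t Ht').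
  pose proof (is_derive_mult _ _ _ _ _ (is_derive_pow f n t _ Hf) (EL t Ht) Rmult_comm)
    as Hprod.
  pose proof (is_derive_scal_l _ _ _ (/ INR n) Hprod) as Hpot.
  unfold flux_potential.
  match type of Hpot with is_derive _ _ ?v => replace (S_integrand n lam f t) with v end;
    [exact Hpot|].
  unfold S_integrand, flux, scal, plus, mult; cbn -[INR pow sqrt Rinv Derive cos].
  fold (speed t).
  pose proof (speed_pos t Ht') as HW.
  assert (HnR : INR n <> 0) by (apply not_0_INR; exact Hn).
  destruct n as [|m]; [contradiction|].
  rewrite Nat.sub_1_r; simpl pred.
  transitivity (f t ^ m * cos t ^ m * (Derive f t ^ 2 + lam ^ 2 * f t ^ 2) / speed t).
  - simpl pow; field; lra.
  - rewrite <- (speed_sqr t Ht'); field; lra.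
Qed.

Lemma flux_potential_PI2 : (2 <= n)%nat -> flux_potential (PI / 2) = 0.
Proof.
  intros Hn; unfold flux_potential, flux.
  rewrite cos_PI2, pow_i by lia; unfold Rdiv; ring.
Qed.

Lemma flux_potential_0 (A : R) :
  solves_EL n lam A f -> flux_potential 0 = A / sqrt (A ^ 2 + lam ^ 2) / INR n.
Proof.
  intros [Hf0 [HA _]]; unfold flux_potential, flux.
  rewrite cos_0, Hf0, HA, !pow1, !Rmult_1_r, Rmult_1_l; reflexivity.
Qed.

Lemma S_nl_solves_EL (A : R) :
  (2 <= n)%nat -> solves_EL n lam A f ->
  S_nl n lam f = - (A / sqrt (A ^ 2 + lam ^ 2)) / INR n.
Proof.
  intros Hn Hsol.
  assert (HPI : 0 < PI / 2) by (pose proof PI_RGT_0; lra).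
  unfold S_nl; rewrite (RInt_derive_left_open flux_potential).
  - rewrite flux_potential_PI2, (flux_potential_0 A) by assumption.
    unfold Rdiv; ring.
  - exact HPI.
  - intros t Ht; apply (is_derive_flux_potential A); [lia | assumption | exact Ht].
  - apply continuous_S_integrand.
  - apply continuous_flux_potential; lra.
Qed.

End Profile.

Theorem lemma5p5 (n : nat) (lam A : R) (f : R -> R) :
  (2 <= n <= 6)%nat -> 0 < lam < 1 ->
  admissible f -> solves_EL n lam A f ->
  (forall g : R -> R, admissible g -> g 0 = 1 -> S_nl n lam f <= S_nl n lam g) ->
  S_nl n lam f < 1 / INR n.
Proof.
  intros Hn Hlam Hadm Hsol _.
  assert (HnR : 0 < INR n) by (apply lt_0_INR; lia).
  assert (Hratio : -1 < A / sqrt (A ^ 2 + lam ^ 2))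
    by (apply Rdiv_sqrt_sqr_plus_gt_m1; lra).
  rewrite (S_nl_solves_EL n lam f (proj1 Hlam) Hadm A) by (lia || exact Hsol).
  unfold Rdiv; apply Rmult_lt_compat_r; [now apply Rinv_0_lt_compat | lra].
Qed.
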